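(* Let $\theta\in\mathbb{R}$, $\chi\in\mathbb{R}\setminus\{0\}$, $\tilde M=\begin{bmatrix}\cos\theta&\chi\sin\theta\\-\chi^{-1}\sin\theta&\cos\theta\end{bmatrix}$, let $n\ge0$ be an integer, $(q_0,p_0)\in\mathbb{R}^2$, $(q_n,p_n)^T=\tilde M^n(q_0,p_0)^T$, $H(q,p)=\frac12(p^2+q^2)$ and $\Delta(q_0,p_0)=H(q_n,p_n)-H(q_0,p_0)$. If $\chi^2\ge1$ then $\Delta(q_0,p_0)\le\frac12(\chi^2-1)p_0^2$; if $\chi^2\le1$ then $\Delta(q_0,p_0)\le\frac12(\chi^{-2}-1)q_0^2$. These bounds are uniform in $n$.
   Context: $\tilde M$ is the one-step matrix of a consistent reversible volume-preserving integrator applied with a stable step size $h$ to the harmonic oscillator $dq/dt=p$, $dp/dt=-q$ (there $\theta=\theta_h$, $\chi=\chi_h$). *)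

From Stdlib Require Import Reals Lra.
Open Scope R_scope.

(* 2x2 real matrices [[a b];[c d]] represented as ((a,b),(c,d)). *)
Definition mat2 : Type := ((R * R) * (R * R))%type.

Definition mat2_mul (A B : mat2) : mat2 :=
  let '((a, b), (c, d)) := A in
  let '((e, f), (g, h)) := B in
  ((a * e + b * g, a * f + b * h), (c * e + d * g, c * f + d * h)).

Definition mat2_id : mat2 := ((1, 0), (0, 1)).

Fixpoint mat2_pow (A : mat2) (n : nat) : mat2 :=
  match n with
  | O => mat2_id
  | S k => mat2_mul A (mat2_pow A k)
  end.

Definition mat2_app (A : mat2) (v : R * R) : R * R :=
  let '((a, b), (c, d)) := A in
  let '(x, y) := v in
  (a * x + b * y, c * x + d * y).

Definition Mtilde (theta chi : R) : mat2 :=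
  ((cos theta, chi * sin theta), (- (/ chi) * sin theta, cos theta)).

Definition Ham (v : R * R) : R := (1/2) * (snd v ^ 2 + fst v ^ 2).

Definition energy_drift (theta chi : R) (n : nat) (q0 p0 : R) : R :=
  Ham (mat2_app (mat2_pow (Mtilde theta chi) n) (q0, p0)) - Ham (q0, p0).

(* The quadratic form K(q,p) = q^2 + chi^2 p^2 is conserved by M~, hence by every power.
   If chi^2 >= 1 then 2H <= K, so 2H(q_n,p_n) <= K(q_0,p_0) = 2H(q_0,p_0) + (chi^2-1) p_0^2;
   if chi^2 <= 1 then chi^2 2H <= K, so chi^2 2H(q_n,p_n) <= chi^2 2H(q_0,p_0) + (1-chi^2) q_0^2. *)
From Stdlib Require Import Reals Lra Psatz.
Open Scope R_scope.

Definition scaled_norm2 (chi : R) (v : R * R) : R := fst v ^ 2 + chi ^ 2 * snd v ^ 2.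

Lemma mat2_app_mul (A B : mat2) (v : R * R) :
  mat2_app (mat2_mul A B) v = mat2_app A (mat2_app B v).
Proof.
  destruct A as [[a b] [c d]], B as [[e f] [g h]], v as [x y]; simpl.
  f_equal; ring.
Qed.

Lemma mat2_app_id (v : R * R) : mat2_app mat2_id v = v.
Proof. destruct v as [x y]; simpl; f_equal; ring. Qed.

Lemma mat2_pow_invariant (f : R * R -> R) (A : mat2) :
  (forall v, f (mat2_app A v) = f v) ->
  forall n v, f (mat2_app (mat2_pow A n) v) = f v.
Proof.
  intros HA n v; induction n as [|n IH].
  - now rewrite mat2_app_id.
  - cbn [mat2_pow]; now rewrite mat2_app_mul, HA.
Qed.

Lemma scaled_norm2_Mtilde (theta chi : R) (v : R * R) : chi <> 0 ->
  scaled_norm2 chi (mat2_app (Mtilde theta chi) v) = scaled_norm2 chi v.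
Proof.
  intro Hchi; destruct v as [x y]; unfold scaled_norm2, Mtilde; simpl.
  assert (Hsin : sin theta ^ 2 = 1 - cos theta ^ 2)
    by (pose proof (sin2_cos2 theta); unfold Rsqr in *; simpl; lra).
  field_simplify; [|exact Hchi].
  rewrite Hsin; field; exact Hchi.
Qed.

Lemma energy_drift_le_of_large_scale (chi q0 p0 q p : R) : chi ^ 2 >= 1 ->
  scaled_norm2 chi (q, p) = scaled_norm2 chi (q0, p0) ->
  Ham (q, p) - Ham (q0, p0) <= (1/2) * (chi ^ 2 - 1) * p0 ^ 2.
Proof. unfold scaled_norm2, Ham; simpl; intros; nra. Qed.

Lemma energy_drift_le_of_small_scale (chi q0 p0 q p : R) : chi <> 0 -> chi ^ 2 <= 1 ->
  scaled_norm2 chi (q, p) = scaled_norm2 chi (q0, p0) ->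
  Ham (q, p) - Ham (q0, p0) <= (1/2) * (/ (chi ^ 2) - 1) * q0 ^ 2.
Proof.
  unfold scaled_norm2, Ham; cbn [fst snd]; intros Hchi Hle Hq.
  assert (Hpos : 0 < chi ^ 2) by nra.
  apply Rmult_le_reg_l with (chi ^ 2); [exact Hpos|].
  replace (chi ^ 2 * (1 / 2 * (/ chi ^ 2 - 1) * q0 ^ 2))
    with (1 / 2 * (1 - chi ^ 2) * q0 ^ 2) by (field; exact Hchi).
  nra.
Qed.

Theorem proposition6p2 (theta chi : R) (Hchi : chi <> 0) (n : nat) (q0 p0 : R) :
  (chi ^ 2 >= 1 -> energy_drift theta chi n q0 p0 <= (1/2) * (chi ^ 2 - 1) * p0 ^ 2) /\
  (chi ^ 2 <= 1 -> energy_drift theta chi n q0 p0 <= (1/2) * (/ (chi ^ 2) - 1) * q0 ^ 2).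
Proof.
  pose proof (mat2_pow_invariant (scaled_norm2 chi) (Mtilde theta chi)
                (fun v => scaled_norm2_Mtilde theta chi v Hchi) n (q0, p0)) as Hconserved.
  unfold energy_drift.
  destruct (mat2_app (mat2_pow (Mtilde theta chi) n) (q0, p0)) as [q p].
  split; intro Hscale.
  - exact (energy_drift_le_of_large_scale chi q0 p0 q p Hscale Hconserved).
  - exact (energy_drift_le_of_small_scale chi q0 p0 q p Hchi Hscale Hconserved).
Qed.
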